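(* Let $N \ge 1$ and let $W_N$ be the set of binary words of length $N$. Define $\varphi_5 : W_N \to W_N$ by $\varphi_5(u) = v\, 1\, 0^{p+2} v'$ if $u = v 0^p 100 v'$ where $p \geq 1$, $v'$ is a (possibly empty) word, and $v$ is a (possibly empty) word which is either empty or ends with the letter $1$ and such that $v 0^p$ does not contain $0100$ as a contiguous subword; and $\varphi_5(u) = u$ otherwise. Then $|P(\varphi_5(u))| \leq |P(u)|$ for every $u \in W_N$.
   Context: For a binary word $x$, $x^j$ denotes $j$ concatenated copies of $x$, and juxtaposition denotes concatenation. For a binary word $w = w_1 \cdots w_\ell$ of length $\ell$, $P(w)$ is the set of indices $i \geq 2$ such that at least one of the following holds: (i) $\ell \geq i$ and $w_{i-1} w_i = 00$; (ii) $\ell \geq i+2$ and $w_{i-1} w_i w_{i+1} w_{i+2} = 0100$; (iii) $\ell \geq i+3$ and $w_{i-1} \cdots w_{i+3} = 01010$. *)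

(* Binary words are [seq bool], letter 0 = false, letter 1 = true. *)
From mathcomp Require Import all_boot.
Set Implicit Arguments. Unset Strict Implicit. Unset Printing Implicit Defensive.

(* 1-indexed letter access: w_i = letter w i (only used for 1 <= i <= size w). *)
Definition letter (w : seq bool) (i : nat) : bool := nth false w i.-1.

Definition inP (w : seq bool) (i : nat) : bool :=
  (2 <= i) &&
  [|| (i <= size w) && ~~ letter w i.-1 && ~~ letter w i,
      (i + 2 <= size w) && ~~ letter w i.-1 && letter w i
         && ~~ letter w i.+1 && ~~ letter w i.+2
    | (i + 3 <= size w) && ~~ letter w i.-1 && letter w i
         && ~~ letter w i.+1 && letter w i.+2 && ~~ letter w i.+3 ].

(* P(w) as the (sorted, duplicate-free) list of its elements; every element of
   P(w) lies in [2, size w], so enumerating that range is exhaustive. *)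
Definition Pset (w : seq bool) : seq nat := [seq i <- iota 2 (size w).-1 | inP w i].

Definition is_dec (u v : seq bool) (p : nat) (v' : seq bool) : bool :=
  [&& 0 < p,
      (v == [::]) || last false v,
      ~~ infix [:: false; true; false; false] (v ++ nseq p false)
    & u == v ++ nseq p false ++ [:: true; false; false] ++ v'].

(* All candidate triples (v, p, v'); any decomposition u = v 0^p 100 v' has
   v = take |v| u, v' = drop (|v|+p+3) u with |v|, p <= size u. *)
Definition phi5_candidates (u : seq bool) : seq (seq bool * nat * seq bool) :=
  [seq (take k u, p, drop (k + p + 3) u) | k <- iota 0 (size u).+1, p <- iota 0 (size u).+1].

Definition phi5 (u : seq bool) : seq bool :=
  if [seq t <- phi5_candidates u | is_dec u t.1.1 t.1.2 t.2] is (v, p, v') :: _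
  then v ++ true :: nseq (p + 2) false ++ v'
  else u.

From mathcomp Require Import all_boot.

(* Index i lies in P(w) exactly when one of the words 00, 0100, 01010 occurs in
   w starting at letter i-1; so |P(w)| is the number of suffixes of w beginning
   with one of these patterns.  Replacing the block 0^p 100 by 1 0^(p+2) leaves
   the count on the block and everything after it unchanged (both give p+1 plus
   the count of 0v'), and, since v ends with 1, no suffix starting inside v
   gains a pattern: the only difference within five letters of v is 0101|1
   versus 0101|0 when p >= 1. *)

Definition P_pattern (s : seq bool) : bool :=
  match s with
  | false :: false :: _ => true
  | false :: true :: false :: false :: _ => true
  | false :: true :: false :: true :: false :: _ => true
  | _ => false
  end.

Arguments P_pattern : simpl never.

Fixpoint count_P_patterns (s : seq bool) : nat :=
  if s is _ :: s' then P_pattern s + count_P_patterns s' else 0.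

Lemma inP_drop w j : inP w j.+2 = P_pattern (drop j w).
Proof.
elim: j w => [|j IH] [|x w] //.
- case: w => [|a [|b [|c [|d t]]]]; rewrite /inP /letter /P_pattern /=;
  by repeat match goal with |- context [if ?b then _ else _] => case: b end.
- by rewrite /= -IH /inP /letter /= !addSn.
Qed.

Lemma count_P_patternsE s :
  count_P_patterns s = count (fun j => P_pattern (drop j s)) (iota 0 (size s).-1).
Proof.
elim: s => [|x [|y s] IH] //; first by case: x.
rewrite -[LHS]/(P_pattern [:: x, y & s] + count_P_patterns (y :: s)) IH /=.
by rewrite -[1]/(1 + 0) iotaDl count_map.
Qed.

Lemma size_Pset w : size (Pset w) = count_P_patterns w.
Proof.
rewrite /Pset size_filter count_P_patternsE -(addn0 2) iotaDl count_map.
by apply: eq_count => j /=; rewrite add2n inP_drop.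
Qed.

Lemma count_P_patterns_zeros k s :
  count_P_patterns (nseq k false ++ false :: s) = k + count_P_patterns (false :: s).
Proof.
elim: k => [|k IH] //; rewrite -[LHS]/(P_pattern (false :: nseq k false ++ false :: s)
  + count_P_patterns (nseq k false ++ false :: s)) IH.
by case: k {IH}.
Qed.

Lemma count_P_patterns_phi5_block p v' :
  count_P_patterns (true :: nseq (p + 2) false ++ v') =
  count_P_patterns (nseq p false ++ [:: true, false, false & v']).
Proof.
have -> : p + 2 = p.+1 + 1 by rewrite addn1 addn2.
rewrite nseqD -catA -[LHS]/(count_P_patterns (nseq p.+1 false ++ false :: v')).
rewrite count_P_patterns_zeros; case: p => [|p] //.
rewrite -[p.+1]addn1 nseqD -catA count_P_patterns_zeros.
rewrite -[count_P_patterns [:: false, true & _]]/(2 + count_P_patterns (false :: v')).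
by rewrite addnA addn2 addn1.
Qed.

Lemma P_pattern_phi5_block t p v' : last false t ->
  P_pattern (t ++ true :: nseq (p + 2) false ++ v') <=
  P_pattern (t ++ nseq p false ++ [:: true, false, false & v']).
Proof.
rewrite addn2; case: p => [|p]; first by rewrite leqnn.
case: t => [|a [|b [|c [|d [|e t]]]]] //=; rewrite /P_pattern /=;
by repeat match goal with |- context [if ?b then _ else _] => case: b end.
Qed.

Lemma count_P_patterns_cat_le v s1 s2 :
  count_P_patterns s1 <= count_P_patterns s2 ->
  (forall t, last false t -> P_pattern (t ++ s1) <= P_pattern (t ++ s2)) ->
  (v == [::]) || last false v ->
  count_P_patterns (v ++ s1) <= count_P_patterns (v ++ s2).
Proof.
move=> le_s le_pat; elim: v => [|x v IH] //= last_v.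
apply: leq_add; first exact: (le_pat (x :: v)).
by apply: IH; case: v last_v.
Qed.

Lemma phi5P u :
  phi5 u = u \/
  exists v p v', is_dec u v p v' /\ phi5 u = v ++ true :: nseq (p + 2) false ++ v'.
Proof.
rewrite /phi5; case E: [seq t <- _ | _] => [|[[v p] v'] rest]; first by left.
right; exists v, p, v'; split=> //.
by have := mem_head (v, p, v') rest; rewrite -E mem_filter => /andP[].
Qed.

Theorem lemma4p5 (N : nat) (u : seq bool) :
  1 <= N -> size u = N -> size (Pset (phi5 u)) <= size (Pset u).
Proof.
move=> _ _; case: (phi5P u) => [-> // | [v [p [v' [dec_u ->]]]]].
case/and4P: dec_u => _ last_v _ /eqP ->.
rewrite !size_Pset; apply: count_P_patterns_cat_le => //.
- by rewrite count_P_patterns_phi5_block.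
- by move=> t; apply: P_pattern_phi5_block.
Qed.
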